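(* Let $(R,+,\times)$ be a finite ring with identity $1$, of order $n$, and let $G$ be a subgroup of the multiplicative group $R^\times$ of invertible elements of $R$, with $k=|G|$. Let $f_G$ be the coset index function induced by $G$. If $$(G-1)\setminus\{0\}\subset R^\times,\qquad\text{where } G-1=\{g-1\mid g\in G\},$$ then $f_G$ is an $\left(n,\frac{n-1}{k}+1,k-1\right)$ zero-difference balanced function from $(R,+)$ to $\mathbb{Z}_m$, where $m=\frac{n-1}{k}+1$.
   Context: For a subgroup $G$ of $R^\times$ and $r\in R$, the coset $rG=\{rg\mid g\in G\}$; the sets $rG$ ($r\in R$) form a partition $D_G$ of $R$. The coset index function induced by $G$ is $f_G(x)=h_G(C_x)$, where $C_x\in D_G$ is the coset containing $x$ and $h_G:D_G\to\mathbb{Z}_{|D_G|}$ is a fixed bijection. Definition: for finite abelian groups $A,B$, a function $f:A\to B$ is an $(n,m,\lambda)$ zero-difference balanced function (ZDBF) if $n=|A|$, $m=|f(A)|$, and for every nonzero $a\in A$, $|\{x\in A\mid f(x+a)-f(x)=0\}|=\lambda$. *)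

From HB Require Import structures.
From mathcomp Require Import all_boot all_order all_algebra all_fingroup.
Set Implicit Arguments. Unset Strict Implicit. Unset Printing Implicit Defensive.
Import GRing.Theory.
Local Open Scope ring_scope.

Definition coset_of_unit (R : finUnitRingType) (G : {group {unit R}}) (r : R)
  : {set R} := [set r * val g | g in G].

Definition cosets_DG (R : finUnitRingType) (G : {group {unit R}})
  : {set {set R}} := [set coset_of_unit G r | r : R].

Definition ZDBF (A B : finZmodType) (f : A -> B) (n m lam : nat) : Prop :=
  [/\ n = #|A|, m = #|[set f x | x : A]| &
      forall a : A, a != 0 -> #|[set x : A | f (x + a) - f x == 0]| = lam].

From HB Require Import structures.
From mathcomp Require Import all_boot all_order all_algebra all_fingroup.
Set Implicit Arguments. Unset Strict Implicit. Unset Printing Implicit Defensive.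
Import GRing.Theory.
Local Open Scope ring_scope.

(* The cosets r G are the orbits of G acting on R by right multiplication.
   The hypothesis makes this action free on R \ {0}: if x g = x with g <> 1
   then x (g - 1) = 0 with g - 1 a unit, so x = 0.  Hence {0} is one orbit and
   every other orbit has k elements, giving n = (m - 1) k + 1.  For a <> 0,
   x and x + a lie in the same coset iff x (g - 1) = a for some g in G \ {1},
   i.e. x = a (g - 1)^-1; freeness makes these k - 1 solutions distinct. *)

Section UnitCosets.

Variables (R : finUnitRingType) (G : {group {unit R}}).

Local Notation to := (FinRing.unit_action R).

Lemma partition_cosets_DG : partition (cosets_DG G) [set: R].
Proof.
have -> : cosets_DG G = orbit to G @: [set: R]
  by apply/setP => B; apply/imsetP/imsetP => -[x _ ->]; exists x.
by apply/orbit_partition/actsP => g _ x; rewrite !inE.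
Qed.

Lemma eq_coset_of_unit x y :
  (coset_of_unit G x == coset_of_unit G y) = (x \in coset_of_unit G y).
Proof. exact: (orbit_eq_mem to). Qed.

Lemma coset_of_unit0 : coset_of_unit G 0 = [set 0].
Proof.
apply/setP => z; rewrite in_set1; apply/imsetP/eqP => [[g _ ->]|->].
  by rewrite mul0r.
by exists 1%g; rewrite ?group1 ?mul0r.
Qed.

Hypothesis unitG_subr1 :
  forall g : {unit R}, g \in G -> val g - 1 != 0 -> val g - 1 \is a GRing.unit.

Lemma unitG_subr1_neq1 g : g \in G -> g != 1%g -> val g - 1 \is a GRing.unit.
Proof.
move=> gG g_neq1; apply: unitG_subr1 => //; rewrite subr_eq0.
by apply: contra g_neq1 => /eqP g1; apply/eqP/val_inj.
Qed.

Lemma unit_act_free x g : x != 0 -> g \in G -> x * val g = x -> g = 1%g.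
Proof.
move=> x_neq0 gG xg_x; apply/eqP; apply: contraNT x_neq0 => g_neq1.
have ug1 := unitG_subr1_neq1 gG g_neq1.
by apply/eqP/(mulIr ug1); rewrite mul0r mulrBr mulr1 xg_x subrr.
Qed.

Lemma unit_act_inj x : x != 0 -> {in G &, injective (fun g => x * val g)}.
Proof.
move=> x_neq0 g g' gG g'G /= xg_xg'; apply/eqP; rewrite eq_mulgV1; apply/eqP.
apply: unit_act_free x_neq0 _ _; first by rewrite groupM ?groupV.
by rewrite FinRing.val_unitM FinRing.val_unitV mulrA xg_xg' mulrK ?(valP g').
Qed.

Lemma card_coset_of_unit x : x != 0 -> #|coset_of_unit G x| = #|G|.
Proof. by move/unit_act_inj/card_in_imset. Qed.

Lemma card_cosets_DG : #|R| = ((#|cosets_DG G| - 1) * #|G|).+1.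
Proof.
have D0 : [set 0] \in cosets_DG G by rewrite -coset_of_unit0 imset_f.
rewrite -cardsT (card_partition partition_cosets_DG) (bigD1 _ D0) /= cards1.
rewrite (cardsD1 [set 0] (cosets_DG G)) D0 addnC addn1 subn1 /= -sum_nat_const.
congr _.+1; apply: eq_big => [B|B]; first by rewrite !inE andbC.
case/andP=> /imsetP[r _ ->] r_neq0; apply: card_coset_of_unit.
by apply: contraNneq r_neq0 => ->; rewrite coset_of_unit0.
Qed.

Lemma mul_div_subr1 a g : g \in G -> g != 1%g ->
  a / (val g - 1) * val g = a / (val g - 1) + a.
Proof.
move=> gG g_neq1.
by rewrite -{3}(divrK (unitG_subr1_neq1 gG g_neq1) a) mulrBr mulr1 subrKC.
Qed.

Lemma shift_in_coset a : a != 0 ->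
  [set x | x + a \in coset_of_unit G x] = [set a / (val g - 1) | g in G :\ 1%g].
Proof.
move=> a_neq0; apply/setP => x; rewrite inE; apply/imsetP/imsetP.
  case=> g gG xa_xg; have g_neq1 : g != 1%g.
    apply: contra a_neq0 => /eqP g1; apply/eqP/(addrI x).
    by rewrite addr0 xa_xg g1 FinRing.val_unit1 mulr1.
  exists g; first by rewrite in_setD1 g_neq1.
  have -> : a = x * (val g - 1) by rewrite mulrBr mulr1 -xa_xg addrC addKr.
  by rewrite mulrK ?unitG_subr1_neq1.
by case=> g /setD1P[g_neq1 gG] ->; exists g; rewrite // mul_div_subr1 // addrC.
Qed.

Lemma card_shift_in_coset a : a != 0 ->
  #|[set x | x + a \in coset_of_unit G x]| = (#|G| - 1)%N.
Proof.
move=> a_neq0; rewrite shift_in_coset // card_in_imset.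
  by rewrite (cardsD1 1%g G) group1 add1n subn1.
move=> g g' /setD1P[g_neq1 gG] /setD1P[g'_neq1 g'G] eq_x.
have ug1 := unitG_subr1_neq1 gG g_neq1.
have x_neq0 : a / (val g - 1) != 0.
  by apply: contra a_neq0 => /eqP x0; rewrite -(divrK ug1 a) x0 mul0r.
apply: (unit_act_inj x_neq0) => //=.
by rewrite mul_div_subr1 // {2}eq_x mul_div_subr1 // eq_x.
Qed.

End UnitCosets.

Theorem corollary2p4 (R : finUnitRingType) (G : {group {unit R}})
    (h : {set R} -> 'Z_#|cosets_DG G|)
    (h_inj : {in cosets_DG G &, injective h})
    (hG : forall g : {unit R}, g \in G -> val g - 1 != 0 -> val g - 1 \is a GRing.unit) :
  ZDBF (fun x : R => h (coset_of_unit G x))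
       #|R| ((#|R| - 1) %/ #|G| + 1)%N (#|G| - 1)%N.
Proof.
have DG_gt0 : (0 < #|cosets_DG G|)%N.
  by apply/card_gt0P; exists (coset_of_unit G 0); apply: imset_f.
have G_gt0 : (0 < #|G|)%N by apply/card_gt0P; exists 1%g.
split => //.
  have -> : [set h (coset_of_unit G x) | x : R] = h @: cosets_DG G.
    by rewrite -imset_comp.
  rewrite (card_in_imset h_inj) (card_cosets_DG hG).
  by rewrite subSS subn0 mulnK // addn1 subn1 prednK.
move=> a a_neq0; rewrite -(card_shift_in_coset hG a_neq0); apply: eq_card => x.
rewrite !inE subr_eq0 -eq_coset_of_unit.
by apply/eqP/eqP => [/h_inj|->] //; apply; apply: imset_f.
Qed.
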